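(* Let $\lambda>0$ and let $\mu(t)$ solve $\dot\mu=-\mu\,(\mathcal K_\mu+\lambda I)^{-1}\mathcal K_\mu\frac{\delta F}{\delta\mu}[\mu]$. Then for every $0\le s\le1$, $$\frac{d}{dt}F(\mu(t))\le-\Big\|\frac{\delta F}{\delta\mu}[\mu_t]\Big\|^2_{L^2_{\mu_t}}+\lambda^s\Big\|(\mathcal K_{\mu_t}+\lambda I)^{-s/2}\frac{\delta F}{\delta\mu}[\mu_t]\Big\|^2_{L^2_{\mu_t}}.$$
   Context: $k$: symmetric positive definite bounded kernel; $\mathcal K_\mu f(x)=\int k(x,x')f(x')d\mu(x')$ is a compact positive self-adjoint operator on $L^2_\mu$ with spectral decomposition (eigenvalues $\sigma_j\ge0$, orthonormal eigenbasis $e_j$), and powers are defined spectrally. $\frac{\delta F}{\delta\mu}$: first variation, assumed in $L^2_\mu$; $\frac{d}{dt}F(\mu(t))=\int\frac{\delta F}{\delta\mu}d\dot\mu$. *)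

From HB Require Import structures.
From mathcomp Require Import all_boot all_order all_algebra.
From mathcomp Require Import all_classical all_reals all_analysis.
Set Implicit Arguments. Unset Strict Implicit. Unset Printing Implicit Defensive.
Import Order.TTheory GRing.Theory Num.Theory.
Import numFieldNormedType.Exports.
Local Open Scope classical_set_scope.
Local Open Scope ring_scope.

Section Defs.
Context d (T : measurableType d) (R : realType).

Definition L2 (mu : {measure set T -> \bar R}) (f : T -> R) : Prop :=
  measurable_fun setT f /\ (\int[mu]_x ((f x) ^+ 2)%:E < +oo)%E.

Definition ip (mu : {measure set T -> \bar R}) (f g : T -> R) : R :=
  \int[mu]_x (f x * g x).

Definition L2norm2 (mu : {measure set T -> \bar R}) (f : T -> R) : R :=
  \int[mu]_x ((f x) ^+ 2).

Definition Kop (k : T -> T -> R) (mu : {measure set T -> \bar R}) (f : T -> R) : T -> R :=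
  fun x => \int[mu]_y (k x y * f y).

Definition sym_pd_bounded_kernel (k : T -> T -> R) : Prop :=
  measurable_fun setT (fun p : T * T => k p.1 p.2) /\
  (forall x y, k x y = k y x) /\
  (forall (n : nat) (x : 'I_n -> T) (c : 'I_n -> R),
      0 <= \sum_(i < n) \sum_(j < n) c i * c j * k (x i) (x j)) /\
  (exists M : R, forall x y, `|k x y| <= M).

Definition spectral_decomposition (k : T -> T -> R) (mu : {measure set T -> \bar R})
    (I : Type) (sigma : I -> R) (e : I -> T -> R) : Prop :=
  (forall i, 0 <= sigma i) /\
  (forall i, L2 mu (e i)) /\
  (forall i j, i = j -> ip mu (e i) (e j) = 1) /\
  (forall i j, i <> j -> ip mu (e i) (e j) = 0) /\
  (forall i, {ae mu, forall x, Kop k mu (e i) x = sigma i * e i x}) /\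
  (forall f, L2 mu f -> (forall i, ip mu f (e i) = 0) ->
     {ae mu, forall x, f x = 0}).

(* h represents phi(K_mu) f, defined spectrally: <h, e_i> = phi(sigma_i) <f, e_i> *)
Definition spectral_apply (mu : {measure set T -> \bar R}) (I : Type)
    (sigma : I -> R) (e : I -> T -> R) (phi : R -> R) (f h : T -> R) : Prop :=
  L2 mu h /\ forall i, ip mu h (e i) = phi (sigma i) * ip mu f (e i).

(* the curve mu has, at time t, setwise derivative the signed measure rho mu_t,
   i.e. d/dt mu_tau(A) |_{tau=t} = int_A rho dmu_t for every measurable A *)
Definition measure_deriv_density (mu : R -> {finite_measure set T -> \bar R})
    (t : R) (rho : T -> R) : Prop :=
  forall A, measurable A ->
    is_derive t 1 (fun tau => fine (mu tau A)) (\int[mu t]_(x in A) rho x).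

End Defs.

(* Along the flow, d/dt F(mu_t) = -<g, v> with g = dF/dmu[mu_t], so it
   suffices to show <g, g - v> <= lambda^s |h|^2.  In the eigenbasis (e_j) of
   K_{mu_t}, g - v has coefficients lambda/(sigma_j + lambda) c_j and h has
   coefficients (sigma_j + lambda)^(-s/2) c_j, where c_j = <g, e_j>; since
   x <= x^s for x in (0, 1] and s in [0, 1], the inequality holds coefficient by
   coefficient.  Summing it needs Parseval, not just Bessel: g is approximated in
   L^2 by finite partial sums of its expansion.  Because the basis may be
   uncountable and completeness is only known in the form "orthogonal to every
   e_j implies zero a.e.", the approximation is obtained by building the L^2
   limit of a rapidly converging sequence of partial sums by hand
   (Riesz-Fischer), checking that it has the same coefficients as g, and
   concluding that it equals g a.e. *)

From HB Require Import structures.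
From mathcomp Require Import all_boot all_order all_algebra.
From mathcomp Require Import all_classical all_reals all_analysis.
From mathcomp Require Import measurable_realfun ring lra.
Set Implicit Arguments. Unset Strict Implicit. Unset Printing Implicit Defensive.
Import Order.TTheory GRing.Theory Num.Theory.
Import numFieldNormedType.Exports.
Local Open Scope classical_set_scope.
Local Open Scope ring_scope.

Section RealFacts.
Variable R : realType.

Lemma ler_normM_sqrD (a b : R) : `|a * b| <= a ^+ 2 + b ^+ 2.
Proof.
rewrite normrM -(real_normK (num_real a)) -(real_normK (num_real b)).
have := normr_ge0 a; have := normr_ge0 b; nra.
Qed.

Lemma ler_norm_sqr (x y : R) : 0 <= y -> x ^+ 2 <= y ^+ 2 -> `|x| <= y.
Proof. by move=> y0; rewrite -real_normK ?num_real// ler_sqr// nnegrE. Qed.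

Lemma exists_geometric_lt (C q eps : R) :
  `|q| < 1 -> 0 < eps -> exists k, C * q ^+ k < eps.
Proof.
move=> q1 eps0; have [n _ hn] := cvgr_lt 0 (cvg_geometric C q1) eps eps0.
by exists n; exact: (hn n (leqnn n)).
Qed.

Lemma le0_geometric (x C q : R) :
  `|q| < 1 -> (forall k, x <= C * q ^+ k) -> x <= 0.
Proof.
move=> q1 hx; rewrite leNgt; apply/negP => x0.
have [k hk] := exists_geometric_lt C q1 x0.
by have := le_lt_trans (hx k) hk; rewrite ltxx.
Qed.

Lemma geometric_half_nneseries_le :
  (\sum_(i <oo) ((2^-1 : R) ^+ i)%:E <= 2%:E)%E.
Proof.
have half_ge0 : (0 : R) <= 2^-1 by rewrite invr_ge0.
apply: lime_le; first by apply: is_cvg_nneseries => n _ _; rewrite lee_fin exprn_ge0.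
exists 0%N => // n _ /=; rewrite sumEFin lee_fin.
have := @geometric_le_lim R n 1 2^-1 ler01; rewrite invr_gt0 ger0_norm// invf_lt1//.
rewrite /series/= (_ : 1 / (1 - 2^-1) = 2 :> R); last by field.
by under eq_bigr do rewrite /geometric mul1r; apply; rewrite ?ltr1n.
Qed.

Lemma fine_limn_esup_bounds (u : nat -> R) (k : nat) (a b : R) :
  (forall n, (k <= n)%N -> a <= u n <= b) ->
  a <= fine (limn_esup (fun n => (u n)%:E)) <= b.
Proof.
move=> hu.
have hle : (limn_esup (fun n => (u n)%:E) <= b%:E)%E.
  rewrite limn_esup_lim; apply: lime_le; first exact: is_cvg_esups.
  exists k => // n /= kn; apply: ge_ereal_sup => _ [m /= nm <-].
  by rewrite lee_fin; have /andP[] := hu m (leq_trans kn nm).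
have hge : (a%:E <= limn_esup (fun n => (u n)%:E))%E.
  rewrite limn_esup_lim; apply: lime_ge; first exact: is_cvg_esups.
  exists k => // n /= kn; apply: le_trans (ereal_sup_ubound _); last by exists n => /=.
  by rewrite lee_fin; have /andP[] := hu n kn.
by move: hle hge; case: (limn_esup _) => [r| |] //=; rewrite !lee_fin => -> ->.
Qed.

Lemma telescope_geometric_le (u : nat -> R) (c : R) k :
  (forall m, `|u m.+1 - u m| <= c * (2^-1) ^+ m) ->
  forall j, `|u (k + j)%N - u k| <= 2 * c * (2^-1) ^+ k.
Proof.
move=> hu.
have c0 : 0 <= c by have := le_trans (normr_ge0 _) (hu 0%N); rewrite expr0 mulr1.
suff H j : `|u (k + j)%N - u k| <= 2 * c * (2^-1) ^+ k * (1 - (2^-1) ^+ j).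
  move=> j; apply: le_trans (H j) _; rewrite ler_piMr ?gerBl ?exprn_ge0 ?invr_ge0//.
  by rewrite !mulr_ge0// exprn_ge0// invr_ge0.
elim: j => [|j ih]; first by rewrite addn0 subrr normr0 expr0 subrr mulr0.
rewrite addnS -(subrKA (u (k + j)%N)).
apply: le_trans (ler_normD _ _) _; apply: le_trans (lerD (hu _) ih) _.
rewrite [leLHS](_ : _ = 2 * c * (2^-1) ^+ k * (1 - (2^-1) ^+ j.+1))//.
by rewrite exprD !exprS; field.
Qed.

Lemma sqr_limn_esup_sub_le (u : nat -> R) (r : R) :
  (forall m, 4 ^+ m * (u m.+1 - u m) ^+ 2 <= r) ->
  forall k, (fine (limn_esup (fun n => (u n)%:E)) - u k) ^+ 2 <= 4 * (4^-1) ^+ k * r.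
Proof.
move=> hu k.
have r0 : 0 <= r by apply: le_trans (hu 0%N); rewrite expr0 mul1r sqr_ge0.
have quarter : (2^-1 : R) ^+ 2 = 4^-1 by field.
have step m : `|u m.+1 - u m| <= Num.sqrt r * (2^-1) ^+ m.
  apply: ler_norm_sqr; first by rewrite mulr_ge0 ?sqrtr_ge0// exprn_ge0// invr_ge0.
  rewrite exprMn sqr_sqrtr// -exprM mulnC exprM quarter exprVn.
  by rewrite ler_pdivlMr ?exprn_gt0// mulrC; exact: hu.
set b := 2 * Num.sqrt r * (2^-1) ^+ k.
have b0 : 0 <= b by rewrite !mulr_ge0 ?sqrtr_ge0// exprn_ge0// invr_ge0.
have : `|fine (limn_esup (fun n => (u n)%:E)) - u k| <= b.
  rewrite ler_distl; apply: (fine_limn_esup_bounds (k := k)) => n kn.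
  by move: (telescope_geometric_le k step (n - k)); rewrite subnKC// ler_distl.
rewrite -(ler_sqr _ b0) ?nnegrE// real_normK ?num_real// => /le_trans; apply.
rewrite /b !exprMn sqr_sqrtr// -exprM mulnC exprM quarter.
by rewrite [X in X <= _](_ : _ = 4 * 4^-1 ^+ k * r) //; ring.
Qed.

End RealFacts.

Section L2Space.
Context d (T : measurableType d) (R : realType) (mu : {measure set T -> \bar R}).
Implicit Types (f g : T -> R).

Lemma L2P f : L2 mu f <->
  measurable_fun setT f /\ mu.-integrable setT (EFin \o (fun x => f x ^+ 2)).
Proof.
have sqr_normE : (\int[mu]_x `|(f x ^+ 2)%:E| = \int[mu]_x (f x ^+ 2)%:E)%E.
  by apply: eq_integral => x _ /=; rewrite ger0_norm// sqr_ge0.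
split=> [[mf fi]|[mf /integrableP[_ fi]]]; split => //; last by rewrite -sqr_normE.
apply/integrableP; split; last by rewrite sqr_normE.
by apply/measurable_EFinP; exact: measurable_funX.
Qed.

Lemma L2_measurable f : L2 mu f -> measurable_fun setT f.
Proof. by case. Qed.

Lemma L2_integrable_sqr f : L2 mu f ->
  mu.-integrable setT (EFin \o (fun x => f x ^+ 2)).
Proof. by move/L2P=> []. Qed.

Lemma L2_integrable_mul f g : L2 mu f -> L2 mu g ->
  mu.-integrable setT (EFin \o (fun x => f x * g x)).
Proof.
move=> /L2P[mf if2] /L2P[mg ig2].
apply: (le_integrable measurableT (g := EFin \o (fun x => f x ^+ 2 + g x ^+ 2))).
- by apply/measurable_EFinP; exact: measurable_funM.
- by move=> x _ /=; rewrite lee_fin (le_trans (ler_normM_sqrD _ _)) ?ler_norm.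
- apply: (eq_integrable measurableT (fun x => (f x ^+ 2)%:E + (g x ^+ 2)%:E)%E).
    by move=> x _; rewrite /= EFinD.
  exact: integrableD.
Qed.

Lemma L2_cst0 : L2 mu (fun _ => 0).
Proof. by split; [exact: measurable_cst | rewrite expr0n /= integral0 ltry]. Qed.

Lemma L2D f g : L2 mu f -> L2 mu g -> L2 mu (fun x => f x + g x).
Proof.
move=> hf hg; apply/L2P; split.
  by apply: measurable_funD; exact: L2_measurable.
have := integrableD measurableT (integrableD measurableT (L2_integrable_sqr hf)
  (integrableZl measurableT 2 (L2_integrable_mul hf hg))) (L2_integrable_sqr hg).
apply: eq_integrable => // x _ /=.
by rewrite (_ : 2%E = 2%:E)// -EFinM -!EFinD; congr (_%:E); ring.
Qed.

Lemma L2Z a f : L2 mu f -> L2 mu (fun x => a * f x).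
Proof.
move=> hf; apply/L2P; split.
  by apply: measurable_funM => //; exact: L2_measurable.
have := integrableZl measurableT (a ^+ 2) (L2_integrable_sqr hf).
by apply: eq_integrable => // x _ /=; rewrite -EFinM; congr (_%:E); ring.
Qed.

Lemma L2N f : L2 mu f -> L2 mu (fun x => - f x).
Proof. by move=> /(L2Z (-1)); under eq_fun do rewrite mulN1r. Qed.

Lemma L2B f g : L2 mu f -> L2 mu g -> L2 mu (fun x => f x - g x).
Proof. by move=> hf /L2N; exact: L2D. Qed.

Lemma L2_sum (I : Type) (s : seq I) (a : I -> R) (e : I -> T -> R) :
  (forall i, L2 mu (e i)) -> L2 mu (fun x => \sum_(i <- s) a i * e i x).
Proof.
move=> he; elim: s => [|i s ih].
  by under eq_fun do rewrite big_nil; exact: L2_cst0.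
by under eq_fun do rewrite big_cons; exact: L2D (L2Z _ (he i)) ih.
Qed.

Lemma ipC f g : ip mu f g = ip mu g f.
Proof. by apply: eq_Rintegral => x _; rewrite mulrC. Qed.

Lemma ipDl f1 f2 g : L2 mu f1 -> L2 mu f2 -> L2 mu g ->
  ip mu (fun x => f1 x + f2 x) g = ip mu f1 g + ip mu f2 g.
Proof.
move=> h1 h2 hg; rewrite /ip -RintegralD ?L2_integrable_mul//.
by apply: eq_Rintegral => x _; rewrite mulrDl.
Qed.

Lemma ipZl a f g : L2 mu f -> L2 mu g ->
  ip mu (fun x => a * f x) g = a * ip mu f g.
Proof.
move=> hf hg; rewrite /ip -RintegralZl ?L2_integrable_mul//.
by apply: eq_Rintegral => x _; rewrite mulrA.
Qed.

Lemma ipBl f1 f2 g : L2 mu f1 -> L2 mu f2 -> L2 mu g ->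
  ip mu (fun x => f1 x - f2 x) g = ip mu f1 g - ip mu f2 g.
Proof.
move=> h1 h2 hg; rewrite /ip -RintegralB ?L2_integrable_mul//.
by apply: eq_Rintegral => x _; rewrite mulrBl.
Qed.

Lemma ipZr a f g : L2 mu f -> L2 mu g ->
  ip mu f (fun x => a * g x) = a * ip mu f g.
Proof. by move=> hf hg; rewrite ipC ipZl// ipC. Qed.

Lemma ipBr f g1 g2 : L2 mu f -> L2 mu g1 -> L2 mu g2 ->
  ip mu f (fun x => g1 x - g2 x) = ip mu f g1 - ip mu f g2.
Proof. by move=> hf h1 h2; rewrite ipC ipBl// !(ipC _ f). Qed.

Lemma ip_suml (I : Type) (s : seq I) (a : I -> R) (e : I -> T -> R) g :
  (forall i, L2 mu (e i)) -> L2 mu g ->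
  ip mu (fun x => \sum_(i <- s) a i * e i x) g = \sum_(i <- s) a i * ip mu (e i) g.
Proof.
move=> he hg; elim: s => [|i s ih].
  rewrite big_nil /ip; under eq_Rintegral do rewrite big_nil mul0r.
  by rewrite Rintegral_cst// mul0r.
rewrite big_cons -ih -ipZl// -ipDl//; last 2 first.
- exact: L2Z.
- exact: L2_sum.
by apply: eq_Rintegral => x _; rewrite big_cons.
Qed.

Lemma L2norm2E f : L2norm2 mu f = ip mu f f.
Proof. by apply: eq_Rintegral => x _; rewrite expr2. Qed.

Lemma eq_L2norm2_ae f g : measurable_fun setT f -> measurable_fun setT g ->
  {ae mu, forall x, f x = g x} -> L2norm2 mu f = L2norm2 mu g.
Proof.
move=> mf mg fg; rewrite /L2norm2 /Rintegral; congr fine.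
have msqr (h : T -> R) :
  measurable_fun setT h -> measurable_fun setT (fun x => (h x ^+ 2)%:E).
  by move=> mh; apply/measurable_EFinP; exact: measurable_funX.
apply: (ae_eq_integral _ _ measurableT (msqr _ mf) (msqr _ mg)).
by apply: filterS fg => x /= ->.
Qed.

Lemma ip_ge0 f : 0 <= ip mu f f.
Proof. by apply: Rintegral_ge0 => x _; rewrite -expr2 sqr_ge0. Qed.

Lemma ip_le_AMGM f g t : L2 mu f -> L2 mu g -> 0 < t ->
  2 * ip mu f g <= t * ip mu f f + ip mu g g / t.
Proof.
move=> hf hg t0.
have htf := L2Z t hf.
have := ip_ge0 (fun x => t * f x - g x).
rewrite ipBl//; last exact: L2B.
rewrite !ipBr// !ipZl// !ipZr// (ipC g f).
set A := ip mu f f; set B := ip mu f g; set C := ip mu g g; move=> h.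
have -> : t * A + C / t = (t * (t * A) - t * B - (t * B - C)) / t + 2 * B.
  by field; rewrite gt_eqF.
by rewrite lerDr divr_ge0// ltW.
Qed.

Lemma ip_le_of_L2norm2_small f g eta : L2 mu f -> L2 mu g -> 0 < eta ->
  L2norm2 mu f <= eta ^+ 2 / (L2norm2 mu g + 1) -> ip mu f g <= eta.
Proof.
rewrite !L2norm2E => hf hg eta0 hff.
set W := ip mu g g in hff *; have W0 : 0 <= W by exact: ip_ge0.
have tau0 : 0 < (W + 1) / eta by rewrite divr_gt0// ltr_wpDl.
have := ip_le_AMGM hf hg tau0.
have := ler_wpM2l (ltW tau0) hff.
rewrite (_ : (W + 1) / eta * (eta ^+ 2 / (W + 1)) = eta); last by field; lra.
rewrite invf_div mulrA (_ : W * eta / (W + 1) = eta - eta / (W + 1)); last by field; lra.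
have : 0 <= eta / (W + 1) by rewrite divr_ge0// ?ltW// ltr_wpDl.
lra.
Qed.

End L2Space.

Section OrthonormalFamily.
Context d (T : measurableType d) (R : realType) (mu : {measure set T -> \bar R}).
Variables (I : eqType) (e : I -> T -> R).
Hypothesis e_L2 : forall i, L2 mu (e i).
Hypothesis ip_ee : forall i, ip mu (e i) (e i) = 1.
Hypothesis ip_ee_neq : forall i j, i != j -> ip mu (e i) (e j) = 0.

Definition lincomb (js : seq I) (a : I -> R) x := \sum_(j <- js) a j * e j x.
Definition fourier_coef (f : T -> R) j := ip mu f (e j).

Lemma L2_lincomb js a : L2 mu (lincomb js a).
Proof. exact: L2_sum. Qed.

Lemma ip_lincomb f js a : L2 mu f ->
  ip mu (lincomb js a) f = \sum_(j <- js) a j * fourier_coef f j.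
Proof. by move=> hf; rewrite ip_suml//; apply: eq_bigr => j _; rewrite ipC. Qed.

Lemma fourier_coef_lincomb js a i : uniq js ->
  fourier_coef (lincomb js a) i = if i \in js then a i else 0.
Proof.
rewrite /fourier_coef /lincomb ip_suml//.
elim: js => [|j js ih] /=; first by rewrite big_nil.
move=> /andP[jn ujs]; rewrite big_cons in_cons ih//.
have [->|ij] := eqVneq i j; first by rewrite ip_ee mulr1 (negbTE jn) addr0.
by rewrite ip_ee_neq 1?eq_sym// mulr0 add0r.
Qed.

Lemma L2norm2_lincomb js a : uniq js ->
  L2norm2 mu (lincomb js a) = \sum_(j <- js) a j ^+ 2.
Proof.
move=> ujs; rewrite L2norm2E ip_lincomb; last exact: L2_lincomb.
by apply: eq_big_seq => j hj; rewrite fourier_coef_lincomb// hj expr2.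
Qed.

Lemma L2norm2_sub_fourier_sum js f : uniq js -> L2 mu f ->
  L2norm2 mu (fun x => f x - lincomb js (fourier_coef f) x) =
  L2norm2 mu f - \sum_(j <- js) fourier_coef f j ^+ 2.
Proof.
move=> ujs hf; have hS := L2_lincomb js (fourier_coef f).
rewrite !L2norm2E ipBl//; last exact: L2B.
rewrite !ipBr// ip_lincomb// (ipC mu f) ip_lincomb//.
rewrite -(L2norm2E mu (lincomb _ _)) L2norm2_lincomb//.
have -> : \sum_(j <- js) fourier_coef f j * fourier_coef f j =
          \sum_(j <- js) fourier_coef f j ^+ 2 by apply: eq_bigr => j _; rewrite expr2.
ring.
Qed.

Lemma bessel js f : uniq js -> L2 mu f ->
  \sum_(j <- js) fourier_coef f j ^+ 2 <= L2norm2 mu f.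
Proof.
by move=> ujs hf; rewrite -subr_ge0 -L2norm2_sub_fourier_sum// L2norm2E ip_ge0.
Qed.

Lemma fourier_coef_sqr_le f i : L2 mu f -> fourier_coef f i ^+ 2 <= L2norm2 mu f.
Proof. by move=> hf; have := bessel (js := [:: i]) erefl hf; rewrite big_seq1. Qed.

Lemma fourier_coef_eq_of_approx (S : nat -> T -> R) g i a (C q : R) :
  `|q| < 1 -> L2 mu g -> (forall k, L2 mu (S k)) ->
  (forall k, L2norm2 mu (fun x => g x - S k x) <= C * q ^+ k) ->
  (forall k, (fourier_coef (S k) i - a) ^+ 2 <= C * q ^+ k) ->
  fourier_coef g i = a.
Proof.
move=> q1 hg hS hgS hSa; apply/eqP; rewrite -subr_eq0 -sqrf_eq0 eq_le sqr_ge0 andbT.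
apply: (le0_geometric (C := 4 * C) q1) => k.
have := fourier_coef_sqr_le i (L2B hg (hS k)).
rewrite /fourier_coef ipBl// -!/(fourier_coef _ i) => hk.
move: hk (hgS k) (hSa k); rewrite -mulrA.
set x := fourier_coef g i; set y := fourier_coef (S k) i; set t := C * q ^+ k.
by have := sqr_ge0 (x - 2 * y + a); nra.
Qed.

End OrthonormalFamily.

Section RieszFischer.
Context d (T : measurableType d) (R : realType) (mu : {measure set T -> \bar R}).
Variable S : nat -> T -> R.
Hypothesis S_L2 : forall k, L2 mu (S k).
Hypothesis S_rapid : forall k, L2norm2 mu (fun x => S k.+1 x - S k x) <= (8^-1) ^+ k.

Definition limsup_fun x := fine (limn_esup (fun n => (S n x)%:E)).

Lemma measurable_limsup_fun : measurable_fun setT limsup_fun.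
Proof.
apply: measurableT_comp; first exact: fine_measurable.
by apply: measurable_fun_limn_esup => n; apply/measurable_EFinP; exact: L2_measurable.
Qed.

(* Against the 8^-m decay of the increments the weights 4^m keep [dom]
   integrable, while wherever [dom] is finite they force the increments to be
   summable. *)
Let dom x := (\sum_(m <oo) (4 ^+ m * (S m.+1 x - S m x) ^+ 2)%:E)%E.

Let dom_term_ge0 m x : 0 <= 4 ^+ m * (S m.+1 x - S m x) ^+ 2.
Proof. by rewrite mulr_ge0 ?sqr_ge0// exprn_ge0. Qed.

Let dom_ge0 x : (0 <= dom x)%E.
Proof. by apply: nneseries_ge0 => m _ _; rewrite lee_fin. Qed.

Let measurable_dom_term m :
  measurable_fun setT (fun x => (4 ^+ m * (S m.+1 x - S m x) ^+ 2)%:E).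
Proof.
apply/measurable_EFinP; apply: measurable_funM => //; apply: measurable_funX.
by apply: measurable_funB; exact: L2_measurable.
Qed.

Let measurable_dom : measurable_fun setT dom.
Proof. by apply: ge0_emeasurable_sum => [m x _ _|m _]; rewrite ?lee_fin. Qed.

Let integral_dom_le : (\int[mu]_x dom x <= 2%:E)%E.
Proof.
rewrite integral_nneseries// => [|m x _]; last by rewrite lee_fin.
apply: le_trans _ (geometric_half_nneseries_le R).
apply: lee_nneseries => [m _ _|m _]; first by apply: integral_ge0 => x _; rewrite lee_fin.
under eq_integral do rewrite EFinM.
have hD : L2 mu (fun x => S m.+1 x - S m x) by exact: L2B.
rewrite ge0_integralZl_EFin//; last 2 first.
- by move=> x _; rewrite lee_fin sqr_ge0.
- by apply/measurable_EFinP; exact: measurable_funX (L2_measurable hD).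
have := S_rapid m; rewrite /L2norm2 /Rintegral -lee_fin fineK; last first.
  by rewrite ge0_fin_numE ?(proj2 hD)// integral_ge0// => x _; rewrite lee_fin sqr_ge0.
move=> h; apply: le_trans (lee_wpmul2l _ h) _; first by rewrite lee_fin exprn_ge0.
by rewrite -EFinM lee_fin -exprMn (_ : (4 : R) * 8^-1 = 2^-1)//; field.
Qed.

Let sqr_limsup_sub_le_dom k x :
  (((limsup_fun x - S k x) ^+ 2)%:E <= (4 * (4^-1) ^+ k)%:E * dom x)%E.
Proof.
case Hx : (dom x) => [r| |]; last by have := dom_ge0 x; rewrite Hx.
  rewrite -EFinM lee_fin; apply: sqr_limn_esup_sub_le => m.
  have : (\sum_(0 <= i < m.+1) (4 ^+ i * (S i.+1 x - S i x) ^+ 2)%:E <= dom x)%E.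
    by apply: nneseries_lim_ge => i _; rewrite lee_fin.
  rewrite Hx big_nat_recr//= sumEFin -EFinD lee_fin; apply: le_trans.
  by rewrite lerDr sumr_ge0.
by rewrite gt0_muley ?leey// lte_fin mulr_gt0// exprn_gt0.
Qed.

Let integral_le_dom (c : R) (f : T -> \bar R) : 0 <= c ->
  (forall x, 0 <= f x)%E -> measurable_fun setT f -> (forall x, f x <= c%:E * dom x)%E ->
  (\int[mu]_x f x <= (c * 2)%:E)%E.
Proof.
move=> c0 f0 mf hf.
apply: le_trans (ge0_le_integral mu measurableT (fun x _ => f0 x) mf _
  (fun x _ => hf x)) _; first by apply: emeasurable_funM => //; exact: measurable_cst.
by rewrite ge0_integralZl// EFinM; apply: lee_wpmul2l; rewrite ?lee_fin.
Qed.

Lemma L2norm2_limsup_sub_le k :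
  L2norm2 mu (fun x => limsup_fun x - S k x) <= 8 * (4^-1) ^+ k.
Proof.
have : (\int[mu]_x ((limsup_fun x - S k x) ^+ 2)%:E <= (4 * (4^-1) ^+ k * 2)%:E)%E.
  apply: integral_le_dom.
  - by rewrite mulr_ge0// exprn_ge0.
  - by move=> x; rewrite lee_fin sqr_ge0.
  - apply/measurable_EFinP; apply: measurable_funX; apply: measurable_funB.
      exact: measurable_limsup_fun.
    exact: L2_measurable.
  - exact: sqr_limsup_sub_le_dom.
rewrite /L2norm2 /Rintegral (_ : 4 * (4^-1) ^+ k * 2 = 8 * (4^-1) ^+ k); last by ring.
have : (0 <= \int[mu]_x ((limsup_fun x - S k x) ^+ 2)%:E)%E.
  by apply: integral_ge0 => x _; rewrite lee_fin sqr_ge0.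
by case: (\int[mu]_x _)%E => [r| |] //=; rewrite !lee_fin.
Qed.

Lemma L2_limsup_fun : L2 mu limsup_fun.
Proof.
split; first exact: measurable_limsup_fun.
have hS0 := L2_measurable (S_L2 0).
have sqr_le x : ((limsup_fun x ^+ 2)%:E <= (2 * S 0%N x ^+ 2)%:E + 8%:E * dom x)%E.
  apply: (@le_trans _ _ ((2 * S 0%N x ^+ 2)%:E + 2%:E * ((limsup_fun x - S 0%N x) ^+ 2)%:E)%E).
    by rewrite -EFinM -EFinD lee_fin; have := sqr_ge0 (limsup_fun x - 2 * S 0%N x); nra.
  rewrite leeD2l// (_ : 8%:E = 2%:E * 4%:E)%E; last by rewrite -EFinM; congr (_%:E); ring.
  rewrite -muleA lee_wpmul2l ?lee_fin//.
  by have := sqr_limsup_sub_le_dom 0 x; rewrite expr0 mulr1.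
apply: le_lt_trans (ge0_le_integral mu measurableT _ _ _ (fun x _ => sqr_le x)) _.
- by move=> x _; rewrite lee_fin sqr_ge0.
- by apply/measurable_EFinP; apply: measurable_funX; exact: measurable_limsup_fun.
- apply: emeasurable_funD; last by apply: emeasurable_funM => //; exact: measurable_cst.
  by apply/measurable_EFinP; apply: measurable_funM => //; exact: measurable_funX.
rewrite ge0_integralD//; last 4 first.
- by move=> x _; rewrite lee_fin mulr_ge0// sqr_ge0.
- by apply/measurable_EFinP; apply: measurable_funM => //; exact: measurable_funX.
- by move=> x _; rewrite mule_ge0// lee_fin.
- by apply: emeasurable_funM => //; exact: measurable_cst.
apply: lte_add_pinfty.
  under eq_integral do rewrite EFinM.
  rewrite ge0_integralZl_EFin//; last 2 first.
  - by move=> x _; rewrite lee_fin sqr_ge0.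
  - by apply/measurable_EFinP; exact: measurable_funX.
  by rewrite lte_mul_pinfty// (proj2 (S_L2 0)).
by rewrite ge0_integralZl// lte_mul_pinfty// (le_lt_trans integral_dom_le)// ltry.
Qed.

End RieszFischer.

Lemma ler_sum_subset (R : numDomainType) (I : eqType) (s1 s2 : seq I) (F : I -> R) :
  uniq s1 -> uniq s2 -> {subset s1 <= s2} -> (forall i, 0 <= F i) ->
  \sum_(i <- s1) F i <= \sum_(i <- s2) F i.
Proof.
move=> u1 u2 sub F0; rewrite [leRHS](bigID (mem s1)) /=.
have -> : \sum_(i <- s2 | i \in s1) F i = \sum_(i <- s1) F i.
  rewrite -big_filter (perm_big s1)//; apply: uniq_perm => //; first exact: filter_uniq.
  by move=> i; rewrite mem_filter; apply/andP/idP => [[]//|hi]; split=> //; exact: sub.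
by rewrite lerDl sumr_ge0.
Qed.

Section NestedUnion.
Variables (I : eqType) (ch : nat -> seq I).

Fixpoint nested_union k :=
  if k is k'.+1 then nested_union k' ++ [seq j <- ch k | j \notin nested_union k']
  else ch 0.

Lemma nested_union_uniq : (forall n, uniq (ch n)) -> forall k, uniq (nested_union k).
Proof.
move=> hu; elim=> [|k ih] //=; rewrite cat_uniq ih filter_uniq// andbT.
by apply/hasPn => j; rewrite mem_filter => /andP[].
Qed.

Lemma sub_nested_union k : {subset ch k <= nested_union k}.
Proof.
by case: k => [//|k] j hj /=; rewrite mem_cat mem_filter hj andbT orbN.
Qed.

End NestedUnion.

Section CompleteOrthonormalFamily.
Context d (T : measurableType d) (R : realType) (mu : {measure set T -> \bar R}).
Variables (I : eqType) (e : I -> T -> R).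
Hypothesis e_L2 : forall i, L2 mu (e i).
Hypothesis ip_ee : forall i, ip mu (e i) (e i) = 1.
Hypothesis ip_ee_neq : forall i j, i != j -> ip mu (e i) (e j) = 0.
Hypothesis e_complete : forall f, L2 mu f -> (forall i, ip mu f (e i) = 0) ->
  {ae mu, forall x, f x = 0}.

Section FourierApprox.
Variable f : T -> R.
Hypothesis f_L2 : L2 mu f.

Let c := fourier_coef mu e f.
Let bessel_sums := [set r : R | exists js, uniq js /\ r = \sum_(j <- js) c j ^+ 2].
Let s := sup bessel_sums.

Let bessel_sums_ub : has_ubound bessel_sums.
Proof. by exists (L2norm2 mu f) => _ [js [ujs ->]]; exact: bessel. Qed.

Let sum_le_sup js : uniq js -> \sum_(j <- js) c j ^+ 2 <= s.
Proof. by move=> ujs; apply: (ub_le_sup bessel_sums_ub); exists js. Qed.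

Let exists_exhaustion : exists J : nat -> seq I,
  [/\ forall k, uniq (J k), forall k, exists nw, J k.+1 = J k ++ nw &
      forall k, s - (8^-1) ^+ k < \sum_(j <- J k) c j ^+ 2].
Proof.
have /choice[ch chP] k :
    exists js, uniq js /\ s - (8^-1) ^+ k < \sum_(j <- js) c j ^+ 2.
  have sup_set : has_sup bessel_sums by split=> //; exists 0, [::]; rewrite big_nil.
  have eps0 : 0 < (8^-1 : R) ^+ k by rewrite exprn_gt0// invr_gt0.
  by have [_ [js [ujs ->]] hlt] := sup_adherent eps0 sup_set; exists js.
have J_uniq := nested_union_uniq (fun n => proj1 (chP n)).
exists (nested_union ch); split => // k; first by eexists.
have [ch_uniq /lt_le_trans] := chP k; apply.
by apply: ler_sum_subset => // [|j]; [exact: sub_nested_union | exact: sqr_ge0].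
Qed.

Lemma fourier_sum_approx eps : 0 < eps ->
  exists js, uniq js /\ L2norm2 mu (fun x => f x - lincomb e js c x) <= eps.
Proof.
move=> eps0; have [J [J_uniq J_next J_low]] := exists_exhaustion.
pose S k := lincomb e (J k) c.
have S_L2 k : L2 mu (S k) by exact: L2_lincomb.
have S_rapid k : L2norm2 mu (fun x => S k.+1 x - S k x) <= (8^-1) ^+ k.
  have [nw Jk] := J_next k.
  have := J_uniq k.+1; rewrite Jk cat_uniq => /and3P[_ _ nw_uniq].
  have -> : (fun x => S k.+1 x - S k x) = lincomb e nw c.
    by apply: funext => x; rewrite /S /lincomb Jk big_cat /=; ring.
  have := sum_le_sup (J_uniq k.+1); rewrite Jk big_cat /= L2norm2_lincomb//.
  by have := J_low k; lra.
pose G := limsup_fun S.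
have G_L2 : L2 mu G := L2_limsup_fun S_L2 S_rapid.
have GS := L2norm2_limsup_sub_le S_L2 S_rapid.
have q1 : `|4^-1 : R| < 1 by rewrite ger0_norm ?invr_ge0// invf_lt1// ltr1n.
have coef_G i : fourier_coef mu e G i = c i.
  apply: (fourier_coef_eq_of_approx _ _ _ q1 G_L2 S_L2 (C := 8)) => // k.
  rewrite fourier_coef_lincomb//; case: ifP => iJ.
    by rewrite subrr expr0n /= mulr_ge0// exprn_ge0// invr_ge0.
  have := @sum_le_sup (i :: J k); rewrite /= iJ J_uniq big_cons => /(_ isT).
  have : (8^-1 : R) ^+ k <= 8 * (4^-1) ^+ k.
    rewrite -[leLHS]mul1r ler_pM ?exprn_ge0 ?invr_ge0// ?ler1n//.
    by rewrite lerXn2r ?nnegrE ?invr_ge0// lef_pV2 ?posrE// ler_nat.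
  by have := J_low k; rewrite sub0r sqrrN; lra.
have f_eq_G : {ae mu, forall x, f x - G x = 0}.
  apply: e_complete => [|i]; first exact: L2B.
  by rewrite ipBl// -/(fourier_coef mu e G i) coef_G subrr.
have [k hk] := exists_geometric_lt 8 q1 eps0.
exists (J k); split => //; apply: le_trans (ltW hk); apply: le_trans (GS k).
rewrite (eq_L2norm2_ae (L2_measurable (L2B f_L2 (S_L2 k)))
                      (L2_measurable (L2B G_L2 (S_L2 k)))) //.
by apply: filterS f_eq_G => x /eqP; rewrite subr_eq0 => /eqP ->.
Qed.

End FourierApprox.

Lemma ip_le_fourier_coef g w h (C : R) :
  L2 mu g -> L2 mu w -> L2 mu h -> 0 <= C ->
  (forall j, fourier_coef mu e g j * fourier_coef mu e w j <=
             C * fourier_coef mu e h j ^+ 2) ->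
  ip mu g w <= C * L2norm2 mu h.
Proof.
move=> hg hw hh C0 coef_le; apply/ler_addgt0Pr => eta eta0.
have delta0 : 0 < eta ^+ 2 / (L2norm2 mu w + 1).
  by rewrite divr_gt0 ?exprn_gt0// ltr_wpDl// L2norm2E ip_ge0.
have [js [ujs approx]] := fourier_sum_approx hg delta0.
set S := lincomb e js (fourier_coef mu e g) in approx.
have hS : L2 mu S by exact: L2_lincomb.
have -> : ip mu g w = ip mu (fun x => g x - S x) w + ip mu S w.
  by rewrite ipBl ?subrK.
rewrite addrC lerD //; last exact: ip_le_of_L2norm2_small (L2B hg hS) hw eta0 approx.
rewrite ip_lincomb//; apply: le_trans (_ : C * \sum_(j <- js) fourier_coef mu e h j ^+ 2 <= _).
  by rewrite mulr_sumr; apply: ler_sum => j _.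
by rewrite ler_wpM2l// bessel.
Qed.

End CompleteOrthonormalFamily.

Lemma regularized_weight_le (R : realType) (lam sig s c : R) :
  0 < lam -> 0 <= sig -> 0 <= s <= 1 ->
  c * (lam / (sig + lam) * c) <= lam `^ s * ((sig + lam) `^ (- (s / 2)) * c) ^+ 2.
Proof.
move=> l0 s0 /andP[s0' s1].
have p0 : 0 < sig + lam by lra.
have x0 : 0 < lam / (sig + lam) by rewrite divr_gt0.
have x1 : lam / (sig + lam) <= 1 by rewrite ler_pdivrMr// mul1r; lra.
have -> : lam `^ s * ((sig + lam) `^ (- (s / 2)) * c) ^+ 2 =
          (lam / (sig + lam)) `^ s * c ^+ 2.
  rewrite exprMn expr2 -powRD; last by apply/implyP => _; rewrite gt_eqF.
  rewrite (_ : - (s / 2) + - (s / 2) = - s); last by field.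
  rewrite powRM ?invr_ge0 ?ltW// powRN mulrA; congr (_ * _ * _).
  by rewrite -[(sig + lam)^-1](powR_inv1 (ltW p0)) -powRrM mulN1r powRN.
rewrite mulrCA -expr2 ler_wpM2r ?sqr_ge0//.
by apply: ger1_powR => //; rewrite x0 x1.
Qed.

Theorem mainTheorem18 (d : measure_display) (T : measurableType d) (R : realType)
  (k : T -> T -> R) (lambda : R) (a b : R)
  (F : {finite_measure set T -> \bar R} -> R)
  (dF : {finite_measure set T -> \bar R} -> T -> R)
  (mu : R -> {finite_measure set T -> \bar R})
  (I : R -> Type) (sigma : forall t, I t -> R) (e : forall t, I t -> T -> R)
  (v : R -> T -> R) :
  sym_pd_bounded_kernel k ->
  0 < lambda ->
  (* first variation lies in L^2 *)
  (forall t, t \in `]a, b[ -> L2 (mu t) (dF (mu t))) ->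
  (* spectral decomposition of K_{mu_t} *)
  (forall t, t \in `]a, b[ ->
     spectral_decomposition k (mu t) (sigma t) (e t)) ->
  (* chain rule: d/dt F(mu(t)) = int dF/dmu d(dot mu) *)
  (forall t rho, t \in `]a, b[ -> L2 (mu t) rho ->
     measure_deriv_density mu t rho ->
     is_derive t 1 (fun tau => F (mu tau))
       (\int[mu t]_x (dF (mu t) x * rho x))) ->
  (* v_t = (K_{mu_t} + lambda I)^{-1} K_{mu_t} dF/dmu[mu_t] *)
  (forall t, t \in `]a, b[ ->
     spectral_apply (mu t) (sigma t) (e t) (fun r => r / (r + lambda))
       (dF (mu t)) (v t)) ->
  (* the flow: dot mu_t = - mu_t v_t *)
  (forall t, t \in `]a, b[ -> measure_deriv_density mu t (fun x => - v t x)) ->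
  forall t, t \in `]a, b[ ->
  forall s : R, 0 <= s <= 1 ->
  forall h : T -> R,
    (* h = (K_{mu_t} + lambda I)^{-s/2} dF/dmu[mu_t] *)
    spectral_apply (mu t) (sigma t) (e t) (fun r => (r + lambda) `^ (- (s / 2)))
      (dF (mu t)) h ->
    derive1 (fun tau => F (mu tau)) t <=
      - L2norm2 (mu t) (dF (mu t)) + lambda `^ s * L2norm2 (mu t) h.
Proof.
move=> _ lam0 dF_L2 spec chain v_spec flow t t_ab s s01 h [h_L2 h_coef].
have [sigma_ge0 [e_L2 [ip_ee [ip_ee_neq [_ e_complete]]]]] := spec t t_ab.
have [v_L2 v_coef] := v_spec t t_ab.
set g := dF (mu t); have g_L2 : L2 (mu t) g := dF_L2 t t_ab.
have F_deriv := chain t _ t_ab (L2N v_L2) (flow t t_ab).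
rewrite derive1E (@derive_val _ _ _ _ _ _ _ F_deriv).
rewrite (_ : \int[mu t]_x _ = - ip (mu t) g (v t)); last first.
  by rewrite -mulN1r -ipZr//; apply: eq_Rintegral => x _; rewrite mulN1r mulrN.
suff : ip (mu t) g (fun x => g x - v t x) <= lambda `^ s * L2norm2 (mu t) h.
  by rewrite ipBr// -L2norm2E; lra.
(* [{classic (I t)}] equips the index type with a (classical) decidable equality. *)
apply: (@ip_le_fourier_coef _ _ _ _ {classic (I t)} (e t)) => //.
- by move=> i; exact: ip_ee.
- by move=> i j /eqP; exact: ip_ee_neq.
- exact: L2B.
- exact: powR_ge0.
move=> j; rewrite /fourier_coef ipBl// v_coef h_coef -/g.
have pos : 0 < sigma t j + lambda by rewrite ltr_wpDl.
set c := ip _ g _.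
have -> : c - sigma t j / (sigma t j + lambda) * c = lambda / (sigma t j + lambda) * c.
  by field; rewrite lt0r_neq0.
exact: regularized_weight_le.
Qed.
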